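(* Let $k\ge1$. The logic $\mathbb{L}_k^{\le}$ is a logic of formal undeterminedness with respect to $\sim$ and $\circ$: (a) $\not\models_k^{\le}p\vee\sim p$ for a propositional variable $p$ (so $\mathbb{L}_k^{\le}$ is paracomplete); (b) for a propositional variable $p$, $\circ p\not\models_k^{\le}p$ and $\circ p\not\models_k^{\le}\sim p$; (c) $\circ\alpha\models_k^{\le}\alpha\vee\sim\alpha$ for every formula $\alpha$.
   Context: A modal pseudocomplemented De Morgan algebra ($mpM$-algebra) is an algebra $\langle A,\wedge,\vee,\sim,{}^\ast,0,1\rangle$ such that $\langle A,\wedge,\vee,\sim,0,1\rangle$ is a De Morgan algebra (bounded distributive lattice with $\sim\sim x=x$, $\sim(x\vee y)=\sim x\wedge\sim y$), $x^\ast$ is the pseudocomplement of $x$, and $x\vee\sim x\le x\vee x^\ast$. A $\mathcal{C}_k$-algebra ($k\ge1$) is a pair $(A,t)$ with $A$ an $mpM$-algebra and $t$ an $mpM$-automorphism of $A$ with $t^k=\mathrm{id}$. $Fm$ is the set of formulas built from a denumerable set of variables with connectives $\wedge,\vee$ (binary), $\sim,{}^\ast,t$ (unary), $\top,\bot$ (constants); a valuation into a $\mathcal{C}_k$-algebra $(A,t)$ is a homomorphism $v:Fm\to(A,t)$ (with $v(\top)=1$, $v(\bot)=0$). The degree-preserving logic $\mathbb{L}_k^{\le}=\langle Fm,\models_k^{\le}\rangle$: for nonempty finite $\{\alpha_1,\dots,\alpha_n\}$, $\alpha_1,\dots,\alpha_n\models_k^{\le}\alpha$ iff for every $\mathcal{C}_k$-algebra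 $(A,t)$, every valuation $v$ and every $a\in A$, if $v(\alpha_i)\ge a$ for all $i$ then $v(\alpha)\ge a$; $\emptyset\models_k^{\le}\alpha$ iff $v(\alpha)=1$ for all $(A,t)$ and $v$; for infinite $\Gamma$, $\Gamma\models_k^{\le}\alpha$ iff some finite nonempty subset of $\Gamma$ entails $\alpha$. The consistency operator is $\circ\alpha=\bigwedge_{i=0}^{k}t^i\big((\sim\alpha\vee\alpha)\wedge(\alpha\wedge\sim\alpha)^\ast\big)$. *)

From Stdlib Require Import List.
Import ListNotations.

Record mpM := MpM {
  car :> Type;
  meet : car -> car -> car;
  join : car -> car -> car;
  neg : car -> car;
  pc : car -> car;
  zero : car;
  one : car;
  meetA : forall x y z, meet x (meet y z) = meet (meet x y) z;
  joinA : forall x y z, join x (join y z) = join (join x y) z;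
  meetC : forall x y, meet x y = meet y x;
  joinC : forall x y, join x y = join y x;
  meet_absorb : forall x y, meet x (join x y) = x;
  join_absorb : forall x y, join x (meet x y) = x;
  meet_joinDr : forall x y z, meet x (join y z) = join (meet x y) (meet x z);
  join0x : forall x, join zero x = x;
  meet1x : forall x, meet one x = x;
  negK : forall x, neg (neg x) = x;
  neg_join : forall x y, neg (join x y) = meet (neg x) (neg y);
  pcP : forall x y, meet x y = zero <-> meet y (pc x) = y;
  modal : forall x, meet (join x (neg x)) (join x (pc x)) = join x (neg x)
}.

Definition le (A : mpM) (x y : A) : Prop := meet A x y = x.

Definition mpM_automorphism (A : mpM) (t : A -> A) : Prop :=
  (exists g : A -> A, (forall x, g (t x) = x) /\ (forall x, t (g x) = x)) /\
  (forall x y, t (meet A x y) = meet A (t x) (t y)) /\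
  (forall x y, t (join A x y) = join A (t x) (t y)) /\
  (forall x, t (neg A x) = neg A (t x)) /\
  (forall x, t (pc A x) = pc A (t x)) /\
  t (zero A) = zero A /\ t (one A) = one A.

Fixpoint iterf {X : Type} (n : nat) (f : X -> X) (x : X) : X :=
  match n with O => x | S m => f (iterf m f x) end.

Record Ck_algebra (k : nat) := CkAlg {
  alg :> mpM;
  tau : alg -> alg;
  tau_aut : mpM_automorphism alg tau;
  tau_k : forall x, iterf k tau x = x
}.
Arguments alg {k}.
Arguments tau {k}.

Inductive formula : Type :=
| FVar : nat -> formula
| FAnd : formula -> formula -> formula
| FOr : formula -> formula -> formula
| FNeg : formula -> formula
| FStar : formula -> formula
| FT : formula -> formula
| FTop : formula
| FBot : formula.

Fixpoint eval {k} (C : Ck_algebra k) (v : nat -> C) (f : formula) : C :=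
  match f with
  | FVar n => v n
  | FAnd a b => meet C (eval C v a) (eval C v b)
  | FOr a b => join C (eval C v a) (eval C v b)
  | FNeg a => neg C (eval C v a)
  | FStar a => pc C (eval C v a)
  | FT a => tau C (eval C v a)
  | FTop => one C
  | FBot => zero C
  end.

Definition entails (k : nat) (G : list formula) (a : formula) : Prop :=
  match G with
  | [] => forall (C : Ck_algebra k) (v : nat -> C), eval C v a = one C
  | _ => forall (C : Ck_algebra k) (v : nat -> C) (x : C),
           (forall b, In b G -> le C x (eval C v b)) -> le C x (eval C v a)
  end.

Fixpoint bigAnd (n : nat) (F : nat -> formula) : formula :=
  match n with
  | O => F O
  | S m => FAnd (bigAnd m F) (F (S m))
  end.

Definition circ (k : nat) (a : formula) : formula :=
  bigAnd k (fun i => iterf i FT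
              (FAnd (FOr (FNeg a) a) (FStar (FAnd a (FNeg a))))).

(* Part (c) holds in every C_k-algebra: the value of o a is a meet whose
   i = 0 conjunct is (~a \/ a) /\ (a /\ ~a)^*, so o a <= ~a \/ a, and the
   degree-preserving consequence follows by transitivity of <=.

   Parts (a) and (b) are refuted in one model: the three-element chain
   0 < 1/2 < 1 with ~ swapping 0 and 1 and fixing 1/2, and x^* = 1 iff x = 0,
   is an mpM-algebra; with t = id it is a C_k-algebra for every k.
   - Sending p to 1/2 gives p \/ ~p = 1/2 <> 1, refuting (a).
   - On a classical value (0 or 1) every conjunct of o a equals 1, so o p = 1
     when p is sent to 0 (resp. 1) while p (resp. ~p) takes value 0; taking
     the degree x = 1 refutes (b). *)
From Stdlib Require Import List.
Import ListNotations.

Lemma le_trans (A : mpM) (x y z : A) : le A x y -> le A y z -> le A x z.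
Proof. unfold le; intros Hxy Hyz. rewrite <- Hxy, <- meetA, Hyz; reflexivity. Qed.

Lemma meet_idem (A : mpM) (x : A) : meet A x x = x.
Proof.
  transitivity (meet A x (join A x (meet A x x))).
  - rewrite join_absorb; reflexivity.
  - apply meet_absorb.
Qed.

Lemma meet_le_l (A : mpM) (x y : A) : le A (meet A x y) x.
Proof. unfold le. rewrite (meetC A (meet A x y) x), meetA, meet_idem; reflexivity. Qed.

(* Being above the top element means being equal to it; this turns the
   degree-preserving consequence at degree 1 into truth preservation. *)
Lemma le_one (A : mpM) (y : A) : le A (one A) y <-> y = one A.
Proof. unfold le; rewrite meet1x; reflexivity. Qed.

Lemma bigAnd_le_first k (C : Ck_algebra k) v n F :
  le C (eval C v (bigAnd n F)) (eval C v (F 0)).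
Proof.
  induction n as [|n IH]; simpl.
  - unfold le; apply meet_idem.
  - eapply le_trans; [apply meet_le_l | exact IH].
Qed.

Lemma circ_le_excluded_middle k (C : Ck_algebra k) v a :
  le C (eval C v (circ k a)) (eval C v (FOr a (FNeg a))).
Proof.
  eapply le_trans; [apply bigAnd_le_first |]; simpl.
  eapply le_trans; [apply meet_le_l |].
  rewrite joinC; unfold le; apply meet_idem.
Qed.

Lemma circ_entails_excluded_middle k a :
  entails k [circ k a] (FOr a (FNeg a)).
Proof.
  intros C v x Hx.
  eapply le_trans; [exact (Hx _ (or_introl eq_refl)) |].
  apply circ_le_excluded_middle.
Qed.

Inductive K3 := K0 | Khalf | K1.

Definition k3_meet (a b : K3) : K3 := match a, b with
  | K0, _ | _, K0 => K0 | Khalf, _ | _, Khalf => Khalf | K1, K1 => K1 end.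
Definition k3_join (a b : K3) : K3 := match a, b with
  | K1, _ | _, K1 => K1 | Khalf, _ | _, Khalf => Khalf | K0, K0 => K0 end.
Definition k3_neg (a : K3) : K3 := match a with K0 => K1 | Khalf => Khalf | K1 => K0 end.
Definition k3_pc (a : K3) : K3 := match a with K0 => K1 | _ => K0 end.

Definition K3_mpM : mpM.
Proof.
  refine (MpM K3 k3_meet k3_join k3_neg k3_pc K0 K1 _ _ _ _ _ _ _ _ _ _ _ _ _);
    intros; repeat match goal with x : K3 |- _ => destruct x end;
    simpl; try reflexivity; split; intro; try reflexivity; discriminate.
Defined.

Lemma iterf_id (X : Type) n (x : X) : iterf n (fun y => y) x = x.
Proof. induction n; simpl; auto. Qed.

Definition K3_Ck (k : nat) : Ck_algebra k.
Proof.
  refine (CkAlg k K3_mpM (fun y => y) _ (iterf_id _ k)).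
  repeat split; try reflexivity. exists (fun y => y); split; reflexivity.
Defined.

Lemma K3_eval_iterFT k v i f : eval (K3_Ck k) v (iterf i FT f) = eval (K3_Ck k) v f.
Proof. induction i; simpl; auto. Qed.

Lemma K3_bigAnd_true k v n F :
  (forall i, eval (K3_Ck k) v (F i) = K1) -> eval (K3_Ck k) v (bigAnd n F) = K1.
Proof.
  intro HF; induction n as [|n IH]; simpl; [apply HF |].
  rewrite IH, HF; reflexivity.
Qed.

Lemma K3_circ_classical k v a :
  eval (K3_Ck k) v a <> Khalf -> eval (K3_Ck k) v (circ k a) = K1.
Proof.
  intro Ha; apply K3_bigAnd_true; intro i.
  rewrite K3_eval_iterFT; simpl.
  destruct (eval (K3_Ck k) v a); [reflexivity | contradiction | reflexivity].
Qed.

Lemma not_entails_by_countermodel k (C : Ck_algebra k) (v : nat -> C) b c :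
  eval C v b = one C -> eval C v c <> one C -> ~ entails k [b] c.
Proof.
  intros Hb Hc Hent.
  apply Hc, le_one, (Hent C v (one C)).
  intros b' [<- | []]; apply le_one, Hb.
Qed.

Theorem lemma6p5 (k : nat) (hk : 1 <= k) :
  (forall p : nat, ~ entails k [] (FOr (FVar p) (FNeg (FVar p)))) /\
  (forall p : nat, ~ entails k [circ k (FVar p)] (FVar p) /\
                   ~ entails k [circ k (FVar p)] (FNeg (FVar p))) /\
  (forall a : formula, entails k [circ k a] (FOr a (FNeg a))).
Proof.
  split; [| split].
  -
    intros p Hp; discriminate (Hp (K3_Ck k) (fun _ => Khalf)).
  -
    intro p; split.
    + apply (not_entails_by_countermodel k (K3_Ck k) (fun _ => K0));
        [apply K3_circ_classical | ]; discriminate.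
    + apply (not_entails_by_countermodel k (K3_Ck k) (fun _ => K1));
        [apply K3_circ_classical | ]; discriminate.
  - apply circ_entails_excluded_middle.
Qed.
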